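(* Let $K$ be a number field, let $X\subseteq M_d(K)$ be a closed set in the linear Zariski topology, and let $D,D'\subseteq X$ be arbitrary subsets. If $DD'\subseteq X$, then also $\overline{D}\,\overline{D'}\subseteq X$.
   Context: The linear Zariski topology on $M_d(K)$ has as closed sets exactly the finite unions of vector subspaces; $\overline{D}$ is the closure of $D$ in this topology, and for sets $Y,Z$ of matrices, $YZ=\{yz: y\in Y,z\in Z\}$. *)

From HB Require Import structures.
From mathcomp Require Import all_boot all_order all_algebra all_field.
Set Implicit Arguments. Unset Strict Implicit. Unset Printing Implicit Defensive.
Import GRing.Theory.
Local Open Scope ring_scope.

(* A number field is modelled as a finite-dimensional field extension of Q:
   K : fieldExtType rat.  Subsets of M_d(K) are predicates 'M[K]_d -> Prop. *)

Definition lz_closed (K : fieldType) (d : nat) (X : 'M[K]_d -> Prop) : Prop :=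
  exists Us : seq {vspace 'M[K]_(d, d)},
    forall A : 'M[K]_d, X A <-> has (fun U : {vspace 'M[K]_(d, d)} => A \in U) Us.

Definition lz_closure (K : fieldType) (d : nat) (D : 'M[K]_d -> Prop)
  : 'M[K]_d -> Prop :=
  fun A => forall Y : 'M[K]_d -> Prop,
    lz_closed Y -> (forall B, D B -> Y B) -> Y A.

Definition prod_sub (K : fieldType) (d : nat) (Y Z X : 'M[K]_d -> Prop) : Prop :=
  forall y z, Y y -> Z z -> X (y *m z).

From HB Require Import structures.
From mathcomp Require Import all_boot all_order all_algebra all_field.

(* Linear preimages of finite unions of subspaces are again such unions, so
   left and right multiplication by a fixed matrix are continuous for the
   linear Zariski topology.  Hence the closure can be taken one factor at a
   time: first close D' with the left factor fixed in D, then close D with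
   the right factor fixed in the closure of D'. *)

Section LinearZariski.

Variables (K : fieldType) (d : nat).

Lemma lz_closed_preim (f : {linear 'M[K]_d -> 'M[K]_d}) (X : 'M[K]_d -> Prop) :
  lz_closed X -> lz_closed (fun A => X (f A)).
Proof.
move=> [Us XE]; exists [seq (linfun f @^-1: U)%VS | U <- Us] => A.
apply: iff_trans (XE (f A)) _; rewrite has_map.
by split; apply: sub_has => U /=; rewrite -memv_preim lfunE.
Qed.

Lemma lz_closure_preim (f : {linear 'M[K]_d -> 'M[K]_d}) (X D : 'M[K]_d -> Prop) :
  lz_closed X -> (forall B, D B -> X (f B)) ->
  forall A, lz_closure D A -> X (f A).
Proof.
move=> cX DX A clDA; apply: (clDA (fun B => X (f B))) DX.
exact: lz_closed_preim.
Qed.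

Lemma prod_sub_closure_r (D D' X : 'M[K]_d -> Prop) :
  lz_closed X -> prod_sub D D' X -> prod_sub D (lz_closure D') X.
Proof.
move=> cX DD'X y z Dy.
apply: (lz_closure_preim (mulmx y : {linear 'M[K]_d -> 'M[K]_d})) => // B D'B /=.
exact: DD'X y B Dy D'B.
Qed.

Lemma prod_sub_closure_l (D D' X : 'M[K]_d -> Prop) :
  lz_closed X -> prod_sub D D' X -> prod_sub (lz_closure D) D' X.
Proof.
move=> cX DD'X y z cDy D'z.
apply: (lz_closure_preim (mulmxr z : {linear 'M[K]_d -> 'M[K]_d})) cDy => // B DB /=.
exact: DD'X B z DB D'z.
Qed.

End LinearZariski.

Theorem mainTheorem8 (K : fieldExtType rat) (d : nat)
  (X D D' : 'M[K]_d -> Prop) :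
  lz_closed X ->
  (forall A, D A -> X A) ->
  (forall A, D' A -> X A) ->
  prod_sub D D' X ->
  prod_sub (lz_closure D) (lz_closure D') X.
Proof.
move=> cX _ _ DD'X.
by apply: prod_sub_closure_l => //; apply: prod_sub_closure_r.
Qed.
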